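(* Let $M\in\mathrm{Mat}(2,\mathbb{Z})$ with $D=\det(M)$, and let $n=p_1^{r_1}p_2^{r_2}\cdots p_s^{r_s}$ be the prime decomposition of $n$. If $n$ is not divisible by $4$, then $M$ is reversible mod $n$ if and only if, for each $1\le i\le s$, $D\equiv1$ or $M^2\equiv\mathbb{1}\pmod{p_i^{r_i}}$. If $n=2^{r_1}p_2^{r_2}\cdots p_s^{r_s}$ with $r_1\ge2$ (and $p_2,\dots,p_s$ odd), then $M$ is reversible mod $n$ if and only if $M$ is reversible mod $2^{r_1}$ and, for all $i>1$, $D\equiv1$ or $M^2\equiv\mathbb{1}\pmod{p_i^{r_i}}$.
   Context: $M$ is reversible mod $k$ if $\det M$ is a unit mod $k$ and there exists $R\in\mathrm{GL}(2,\mathbb{Z}/k\mathbb{Z})$ with $RMR^{-1}\equiv M^{-1}\pmod k$. *)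

From mathcomp Require Import all_boot all_order all_algebra.
Set Implicit Arguments. Unset Strict Implicit. Unset Printing Implicit Defensive.
Import GRing.Theory Num.Theory.
Local Open Scope ring_scope.

(* Integer matrices are used as lifts of matrices over Z/kZ.
   Two integer matrices are congruent mod k iff all entries are. *)
Definition mx_eqmod (k : nat) (m n : nat) (A B : 'M[int]_(m, n)) : Prop :=
  forall i j, (A i j = B i j %[mod k%:Z])%Z.

Definition unit_mod (k : nat) (a : int) : Prop :=
  exists u : int, (a * u = 1 %[mod k%:Z])%Z.

Definition inv_mod (k : nat) (A Ainv : 'M[int]_2) : Prop :=
  mx_eqmod k (A *m Ainv) 1%:M /\ mx_eqmod k (Ainv *m A) 1%:M.

Definition reversible_mod (k : nat) (M : 'M[int]_2) : Prop :=
  unit_mod k (\det M) /\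
  exists R Rinv Minv : 'M[int]_2,
    inv_mod k R Rinv /\ inv_mod k M Minv /\
    mx_eqmod k (R *m M *m Rinv) Minv.

(* Reversibility passes to divisors of the modulus, and by the Chinese remainder
   theorem applied entrywise to the witnesses it glues along coprime moduli, so
   only prime powers q = p^r matter.  Mod q, conjugation preserves determinant and
   trace, and M^-1 = D^-1 adj M with tr (adj M) = tr M; hence reversibility forces
   D^2 = 1 and D tr M = tr M.  When p is odd or r <= 1, D^2 = 1 leaves D = 1, or
   D = -1 with D - 1 a unit; then tr M = 0 and Cayley-Hamilton gives M^2 = 1.
   Conversely M^2 = 1 is reversed by R = 1, while for D = 1 one needs R with
   R M = adj M R and det R prime to p: a trace-zero R works as soon as its entries
   satisfy one linear equation, and one of three explicit solutions has a unit
   determinant once the off-scalar part of M is divided by its content. *)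

From mathcomp Require Import all_boot all_order all_algebra.
From mathcomp Require Import ring zify.
Set Implicit Arguments. Unset Strict Implicit. Unset Printing Implicit Defensive.
Import GRing.Theory Num.Theory.
Local Open Scope ring_scope.

Section Matrix2.
Variable R : comPzRingType.
Implicit Types A B : 'M[R]_2.

Lemma eq_mx2 A B : A 0 0 = B 0 0 -> A 0 1 = B 0 1 -> A 1 0 = B 1 0 ->
  A 1 1 = B 1 1 -> A = B.
Proof.
have ord2P (i : 'I_2) : i = 0 \/ i = 1.
  by case: i => -[|[|//]] ?; [left|right]; apply/val_inj.
move=> e00 e01 e10 e11; apply/matrixP => i j.
by case: (ord2P i) => ->; case: (ord2P j) => ->.
Qed.

Lemma mulmx2E A B i j : (A *m B) i j = A i 0 * B 0 j + A i 1 * B 1 j.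
Proof.
rewrite mxE big_ord_recl big_ord1.
by have -> : lift ord0 ord0 = 1 :> 'I_2 by exact/val_inj.
Qed.

Lemma mxtrace2 A : \tr A = A 0 0 + A 1 1.
Proof.
rewrite /mxtrace big_ord_recl big_ord1.
by have -> : lift ord0 ord0 = 1 :> 'I_2 by exact/val_inj.
Qed.

Lemma det_mx2 A : \det A = A 0 0 * A 1 1 - A 0 1 * A 1 0.
Proof.
rewrite (expand_det_row _ 0) big_ord_recl big_ord1 /cofactor !det_mx11 !mxE /=.
have -> : lift 0 0 = 1 :> 'I_2 by exact/val_inj.
have -> : lift 1 0 = 0 :> 'I_2 by exact/val_inj.
by rewrite expr0 expr1 mul1r mulN1r mulrN.
Qed.

Lemma adj_mx2 A : \adj A = (\tr A)%:M - A.
Proof.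
have l01 : lift 0 0 = 1 :> 'I_2 by exact/val_inj.
have l10 : lift 1 0 = 0 :> 'I_2 by exact/val_inj.
rewrite mxtrace2; apply: eq_mx2; rewrite !mxE /cofactor !det_mx11 !mxE /= ?l01 ?l10 /=.
all: rewrite ?modn_small // ?expr0 ?expr1 ?expr2; ring.
Qed.

Lemma mxtrace_adj2 A : \tr (\adj A) = \tr A.
Proof. by rewrite adj_mx2 raddfB /= mxtrace_scalar !mxtrace2; ring. Qed.

Lemma mulmx2_self A : A *m A = \tr A *: A - (\det A)%:M.
Proof.
have {2}-> : A = (\tr A)%:M - \adj A by rewrite adj_mx2 subKr.
by rewrite mulmxBr mul_mx_adj mul_mx_scalar.
Qed.

Lemma mulmx2_self_eq1 A : \tr A = 0 -> \det A = -1 -> A *m A = 1%:M.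
Proof. by move=> trA detA; rewrite mulmx2_self trA detA scale0r sub0r raddfN opprK. Qed.

Definition reverser (x y z : R) : 'M[R]_2 :=
  \matrix_(i, j) if i == 0 then (if j == 0 then y else z)
                 else (if j == 0 then - x else - y).

Lemma det_reverser x y z : \det (reverser x y z) = x * z - y * y.
Proof. by rewrite det_mx2 !mxE /=; ring. Qed.

Lemma reverser_mulmx x y z A :
  x * A 0 1 + y * (A 1 1 - A 0 0) - z * A 1 0 = 0 ->
  reverser x y z *m A = \adj A *m reverser x y z.
Proof.
move=> cond; apply/eqP; rewrite -subr_eq0; apply/eqP.
have -> : reverser x y z *m A - \adj A *m reverser x y z =
    (- (x * A 0 1 + y * (A 1 1 - A 0 0) - z * A 1 0))%:M.
  rewrite adj_mx2 mxtrace2; apply: eq_mx2;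
    by rewrite mxE [X in _ + X]mxE !mulmx2E !mxE /=; ring.
by rewrite cond oppr0 raddf0.
Qed.

End Matrix2.

Section ReversibleMatrix.
Variable R : comUnitRingType.

Definition reversible_mx n (A : 'M[R]_n) :=
  A \in unitmx /\ exists2 S : 'M[R]_n, S \in unitmx & S *m A *m invmx S = invmx A.

Lemma mulmx1_invmx n (A B : 'M[R]_n) : A *m B = 1%:M -> invmx A = B.
Proof.
move=> AB; have [uA _] := mulmx1_unit AB.
by rewrite -[invmx A]mulmx1 -AB mulmxA mulVmx // mul1mx.
Qed.

Lemma reversible_mx_sqr1 n (A : 'M[R]_n) : A *m A = 1%:M -> reversible_mx A.
Proof.
move=> AA; have [uA _] := mulmx1_unit AA; split=> //.
by exists 1%:M; rewrite ?unitmx1 // invmx1 mul1mx mulmx1 (mulmx1_invmx AA).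
Qed.

Lemma reversible_mx_det1 n (A S : 'M[R]_n) :
  \det A = 1 -> S \in unitmx -> S *m A = \adj A *m S -> reversible_mx A.
Proof.
move=> detA uS SA; have uA : A \in unitmx by rewrite unitmxE detA unitr1.
have invA : invmx A = \adj A by rewrite /invmx uA detA invr1 scale1r.
by split=> //; exists S; rewrite // SA invA mulmxK.
Qed.

Lemma reversible_mx2_det_tr (A : 'M[R]_2) :
  reversible_mx A -> \det A ^+ 2 = 1 /\ \det A * \tr A = \tr A.
Proof.
case=> uA [S uS SAS].
have det_inv : \det (invmx A) = \det A.
  by rewrite -SAS !det_mulmx mulrAC -det_mulmx mulmxV // det1 mul1r.
have tr_inv : \tr (invmx A) = \tr A.
  by rewrite -SAS mxtrace_mulC mulmxA mulVmx // mul1mx.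
have adjA : \adj A = \det A *: invmx A by rewrite /invmx uA scalerA mulrV // scale1r.
split; first by rewrite expr2 -{2}det_inv -det_mulmx mulmxV // det1.
by rewrite -{1}tr_inv -mxtraceZ -adjA mxtrace_adj2.
Qed.

End ReversibleMatrix.

Lemma Euclid_dvdzM (p : nat) (x y : int) : prime p ->
  (p%:Z %| x * y)%Z = (p%:Z %| x)%Z || (p%:Z %| y)%Z.
Proof. by move=> pp; rewrite !dvdzE abszM Euclid_dvdM. Qed.

Lemma prime_coprimez (p : nat) (x : int) : prime p ->
  coprimez x p = ~~ (p%:Z %| x)%Z.
Proof. by move=> pp; rewrite coprimezE coprime_sym prime_coprime. Qed.

(* p divides both D - 1 and D + 1 only if p = 2, and then r <= 1. *)
Lemma primepow_dvd_sqr_sub1 (p r : nat) (D : int) :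
  prime p -> odd p || (r <= 1)%N -> ((p ^ r)%N%:Z %| D * D - 1)%Z ->
  ((p ^ r)%N%:Z %| D - 1)%Z \/
  ((p ^ r)%N%:Z %| D + 1)%Z /\ coprimez (D - 1) (p ^ r)%N.
Proof.
move=> pp; case: r => [_ _|r hpr]; first by left; rewrite expn0 dvd1z.
have -> : (p ^ r.+1)%N%:Z = p%:Z ^+ r.+1 by rewrite -natz natrX natz.
have -> : D * D - 1 = (D - 1) * (D + 1) by ring.
have [pDm|pDm] := boolP (p%:Z %| D - 1)%Z; last first.
  have cop : coprimez (D - 1) (p%:Z ^+ r.+1) by rewrite coprimezXr // prime_coprimez.
  right; rewrite -(Gauss_dvdzr _ (_ : coprimez (p%:Z ^+ r.+1) (D - 1))) //.
  by rewrite coprimez_sym.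
left; have [pDp|pDp] := boolP (p%:Z %| D + 1)%Z; last first.
  by rewrite -(Gauss_dvdzl _ (_ : coprimez (p%:Z ^+ r.+1) (D + 1))) //
    coprimezXl // coprimez_sym prime_coprimez.
have p2 : p = 2%N.
  have : (p%:Z %| 2)%Z.
    have -> : 2 = (D + 1) - (D - 1) :> int by ring.
    by rewrite rpredB.
  by rewrite dvdzE /= => /dvdn_leq-/(_ isT); have := prime_gt1 pp; lia.
by move: hpr; rewrite p2 /= ltnS leqn0 => /eqP ->; rewrite expr1 -p2.
Qed.

Lemma exists_reverser_primitive (p : nat) (b c e : int) : prime p ->
  ~~ [&& (p%:Z %| b)%Z, (p%:Z %| c)%Z & (p%:Z %| e)%Z] ->
  exists x y z : int, x * b + y * e - z * c = 0 /\ coprimez (x * z - y * y) p.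
Proof.
move=> pp not_pdvd.
have [pb|pb] := boolP (p%:Z %| b)%Z; last first.
  exists e, (- b), 0; split; first by ring.
  by rewrite mulr0 sub0r coprimeNz mulrNN prime_coprimez // Euclid_dvdzM // orbb.
have [pc|pc] := boolP (p%:Z %| c)%Z; last first.
  exists 0, c, e; split; first by ring.
  by rewrite mul0r sub0r coprimeNz prime_coprimez // Euclid_dvdzM // orbb.
have pe : ~~ (p%:Z %| e)%Z by move: not_pdvd; rewrite pb pc.
exists e, (c - b), e; split; first by ring.
rewrite prime_coprimez //; apply: contra pe => pdvd.
rewrite -[(_ %| e)%Z]orbb -Euclid_dvdzM //.
have -> : e * e = (e * e - (c - b) * (c - b)) + (c - b) * (c - b) by ring.
by rewrite rpredD // dvdz_mulr // rpredB.
Qed.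

(* Dividing b, c, e by their gcd g makes them not all divisible by p;
   g = 0 means that M is scalar. *)
Lemma exists_reverser (M : 'M[int]_2) (p : nat) : prime p ->
  exists2 S : 'M[int]_2, S *m M = \adj M *m S & coprimez (\det S) p.
Proof.
move=> pp; set b := M 0 1; set c := M 1 0; set e := M 1 1 - M 0 0.
set g := gcdz (gcdz b c) e.
have [g0|gn0] := eqVneq g 0.
  move/eqP: g0; rewrite gcdz_eq0 gcdz_eq0 => /andP[/andP[/eqP b0 /eqP c0] /eqP e0].
  exists (reverser 0 1 0).
    by apply: reverser_mulmx; rewrite -/b -/c -/e b0 c0 e0; ring.
  by rewrite det_reverser coprimezE /= coprime_sym coprimen1.
have gb : (g %| b)%Z by rewrite (dvdz_trans (dvdz_gcdl _ _)) ?dvdz_gcdl.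
have gc : (g %| c)%Z by rewrite (dvdz_trans (dvdz_gcdl _ _)) ?dvdz_gcdr.
have ge : (g %| e)%Z by rewrite dvdz_gcdr.
have not_pdvd : ~~ [&& (p%:Z %| b %/ g)%Z, (p%:Z %| c %/ g)%Z & (p%:Z %| e %/ g)%Z].
  apply/negP => /and3P[pb pc pe].
  have : (p%:Z * g %| 1 * g)%Z.
    rewrite mul1r !dvdz_gcd -(divzK gb) -(divzK gc) -(divzK ge).
    by rewrite !dvdz_mul2r ?pb ?pc.
  rewrite dvdz_mul2r // dvdz1 /= => /eqP p1.
  by move: (prime_gt1 pp); rewrite p1.
have [x [y [z [cond cop]]]] := exists_reverser_primitive pp not_pdvd.
exists (reverser x y z); last by rewrite det_reverser.
apply: reverser_mulmx; rewrite -/b -/c -/e -(divzK gb) -(divzK gc) -(divzK ge).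
set b' := (b %/ g)%Z; set c' := (c %/ g)%Z; set e' := (e %/ g)%Z.
have -> : x * (b' * g) + y * (e' * g) - z * (c' * g) =
          (x * b' + y * e' - z * c') * g by ring.
by rewrite cond mul0r.
Qed.

Lemma eqz_mod_dvdl (d k : nat) (x y : int) : (d %| k)%N ->
  (x = y %[mod k%:Z])%Z -> (x = y %[mod d%:Z])%Z.
Proof.
move=> dk /eqP; rewrite eqz_mod_dvd => kxy; apply/eqP; rewrite eqz_mod_dvd.
by apply: dvdz_trans kxy; rewrite dvdzE.
Qed.

Lemma eqz_mod_chinese (a b : nat) (x y : int) : coprime a b ->
  (x = y %[mod a%:Z])%Z -> (x = y %[mod b%:Z])%Z -> (x = y %[mod (a * b)%N%:Z])%Z.
Proof.
by move=> cab xya xyb; apply/eqP; rewrite PoszM zchinese_remainder // xya xyb !eqxx.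
Qed.

Section MatrixCongruence.
Variable k : nat.

Lemma mx_eqmod_refl m n (A : 'M[int]_(m, n)) : mx_eqmod k A A.
Proof. by []. Qed.

Lemma mx_eqmod_sym m n (A B : 'M[int]_(m, n)) : mx_eqmod k A B -> mx_eqmod k B A.
Proof. by move=> AB i j; rewrite AB. Qed.

Lemma mx_eqmod_trans m n (A B C : 'M[int]_(m, n)) :
  mx_eqmod k A B -> mx_eqmod k B C -> mx_eqmod k A C.
Proof. by move=> AB BC i j; rewrite AB BC. Qed.

Lemma mx_eqmod_mul m n p (A A' : 'M[int]_(m, n)) (B B' : 'M[int]_(n, p)) :
  mx_eqmod k A A' -> mx_eqmod k B B' -> mx_eqmod k (A *m B) (A' *m B').
Proof.
move=> AA' BB' i j; apply/eqP; rewrite eqz_mod_dvd !mxE -sumrB rpred_sum // => l _.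
have dA : (k%:Z %| A i l - A' i l)%Z by rewrite -eqz_mod_dvd; apply/eqP.
have dB : (k%:Z %| B l j - B' l j)%Z by rewrite -eqz_mod_dvd; apply/eqP.
have -> : A i l * B l j - A' i l * B' l j =
          (A i l - A' i l) * B l j + A' i l * (B l j - B' l j) by ring.
by rewrite rpredD ?(dvdz_mulr _ dA) ?(dvdz_mull _ dB).
Qed.

End MatrixCongruence.

Lemma mx_eqmod_dvdl (d k : nat) m n (A B : 'M[int]_(m, n)) : (d %| k)%N ->
  mx_eqmod k A B -> mx_eqmod d A B.
Proof. by move=> dk AB i j; apply: eqz_mod_dvdl dk (AB i j). Qed.

Lemma mx_eqmod_chinese (a b : nat) m n (A B : 'M[int]_(m, n)) : coprime a b ->
  mx_eqmod a A B -> mx_eqmod b A B -> mx_eqmod (a * b) A B.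
Proof. by move=> cab ABa ABb i j; apply: eqz_mod_chinese. Qed.

Definition mx_chinese (a b : nat) m n (X Y : 'M[int]_(m, n)) : 'M[int]_(m, n) :=
  \matrix_(i, j) zchinese a b (X i j) (Y i j).

Lemma mx_chinese_modl (a b : nat) m n (X Y : 'M[int]_(m, n)) : coprime a b ->
  mx_eqmod a (mx_chinese a b X Y) X.
Proof. by move=> cab i j; rewrite mxE zchinese_modl. Qed.

Lemma mx_chinese_modr (a b : nat) m n (X Y : 'M[int]_(m, n)) : coprime a b ->
  mx_eqmod b (mx_chinese a b X Y) Y.
Proof. by move=> cab i j; rewrite mxE zchinese_modr. Qed.

Lemma unit_mod_dvdl (d k : nat) (x : int) : (d %| k)%N -> unit_mod k x -> unit_mod d x.
Proof. by move=> dk [u xu]; exists u; apply: eqz_mod_dvdl dk xu. Qed.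

Lemma unit_mod_chinese (a b : nat) (x : int) : coprime a b ->
  unit_mod a x -> unit_mod b x -> unit_mod (a * b) x.
Proof.
move=> cab [u xu] [v xv]; exists (zchinese a b u v); apply: eqz_mod_chinese => //.
  by rewrite -modzMmr zchinese_modl // modzMmr.
by rewrite -modzMmr zchinese_modr // modzMmr.
Qed.

(* [reversible_mod k M] unfolds to
   [unit_mod k (\det M) /\ exists R Ri Mi, reversal_mod k M R Ri Mi]. *)
Definition reversal_mod (k : nat) (M R Ri Mi : 'M[int]_2) : Prop :=
  inv_mod k R Ri /\ inv_mod k M Mi /\ mx_eqmod k (R *m M *m Ri) Mi.

Lemma reversal_mod_dvdl (d k : nat) (M R Ri Mi : 'M[int]_2) : (d %| k)%N ->
  reversal_mod k M R Ri Mi -> reversal_mod d M R Ri Mi.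
Proof. by move=> dk [[? ?] [[? ?] ?]]; do !split; apply: (mx_eqmod_dvdl dk). Qed.

Lemma reversal_mod_chinese (a b : nat) (M R Ri Mi : 'M[int]_2) : coprime a b ->
  reversal_mod a M R Ri Mi -> reversal_mod b M R Ri Mi -> reversal_mod (a * b) M R Ri Mi.
Proof.
by move=> cab [[? ?] [[? ?] ?]] [[? ?] [[? ?] ?]]; do !split; apply: (mx_eqmod_chinese cab).
Qed.

Lemma reversal_mod_eqmod (k : nat) (M R Ri Mi R' Ri' Mi' : 'M[int]_2) :
  mx_eqmod k R' R -> mx_eqmod k Ri' Ri -> mx_eqmod k Mi' Mi ->
  reversal_mod k M R Ri Mi -> reversal_mod k M R' Ri' Mi'.
Proof.
move=> eR eRi eMi [[RRi RiR] [[MMi MiM] RMR]]; have eM := mx_eqmod_refl k M.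
do !split.
- exact: mx_eqmod_trans (mx_eqmod_mul eR eRi) RRi.
- exact: mx_eqmod_trans (mx_eqmod_mul eRi eR) RiR.
- exact: mx_eqmod_trans (mx_eqmod_mul eM eMi) MMi.
- exact: mx_eqmod_trans (mx_eqmod_mul eMi eM) MiM.
apply: mx_eqmod_trans (mx_eqmod_mul (mx_eqmod_mul eR eM) eRi) _.
exact: mx_eqmod_trans RMR (mx_eqmod_sym eMi).
Qed.

Lemma reversible_mod_dvdl (d k : nat) (M : 'M[int]_2) : (d %| k)%N ->
  reversible_mod k M -> reversible_mod d M.
Proof.
move=> dk [u [R [Ri [Mi w]]]]; split; first exact: unit_mod_dvdl dk u.
by exists R, Ri, Mi; apply: reversal_mod_dvdl dk w.
Qed.

Lemma reversible_mod_chinese (a b : nat) (M : 'M[int]_2) : coprime a b ->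
  reversible_mod a M -> reversible_mod b M -> reversible_mod (a * b) M.
Proof.
move=> cab [ua [Ra [Ria [Mia wa]]]] [ub [Rb [Rib [Mib wb]]]].
split; first exact: unit_mod_chinese.
exists (mx_chinese a b Ra Rb), (mx_chinese a b Ria Rib), (mx_chinese a b Mia Mib).
apply: (reversal_mod_chinese cab).
  by apply: reversal_mod_eqmod wa; apply: mx_chinese_modl.
by apply: reversal_mod_eqmod wb; apply: mx_chinese_modr.
Qed.

Lemma reversible_mod1 (M : 'M[int]_2) : reversible_mod 1 M.
Proof.
have eqmod1 (x y : int) : (x = y %[mod 1%N%:Z])%Z by rewrite !modz1.
split; first by exists 0.
by exists 1%:M, 1%:M, 1%:M; do !split; move=> i j.
Qed.

Local Notation mxZp k A := (map_mx (intmul (1 : 'Z_k)) A).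

Section ReductionModK.
Variable k : nat.
Hypothesis k_gt1 : (1 < k)%N.

Lemma intr_Zp_eq0 (z : int) : ((z%:~R : 'Z_k) == 0) = (k%:Z %| z)%Z.
Proof.
have natr_eq0 m : ((m%:R : 'Z_k) == 0) = (k %| m)%N.
  by rewrite -val_eqE /= val_Zp_nat.
by case: z => m; rewrite ?NegzE ?rmorphN ?oppr_eq0 -?pmulrn natr_eq0.
Qed.

Lemma intr_Zp_eqP (x y : int) : (x%:~R = y%:~R :> 'Z_k) <-> (x = y %[mod k%:Z])%Z.
Proof.
split=> /eqP; first by rewrite -subr_eq0 -rmorphB intr_Zp_eq0 -eqz_mod_dvd => /eqP.
by rewrite eqz_mod_dvd -intr_Zp_eq0 rmorphB subr_eq0 => /eqP.
Qed.

Lemma mx_eqmodP m n (A B : 'M[int]_(m, n)) :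
  mx_eqmod k A B <-> mxZp k A = mxZp k B.
Proof.
split=> [AB | /matrixP AB i j]; last by apply/intr_Zp_eqP; have := AB i j; rewrite !mxE.
by apply/matrixP => i j; rewrite !mxE; apply/intr_Zp_eqP.
Qed.

Lemma unit_modP (a : int) : unit_mod k a <-> (a%:~R : 'Z_k) \is a GRing.unit.
Proof.
split=> [[u /intr_Zp_eqP] | /unitrPr[y ay]].
  by rewrite rmorphM rmorph1 => au; apply/unitrPr; exists u%:~R.
exists (y : nat)%:Z; apply/intr_Zp_eqP.
by rewrite rmorphM rmorph1 /= -pmulrn natr_Zp.
Qed.

Lemma coprimez_unit_Zp (a : int) :
  coprimez a k -> (a%:~R : 'Z_k) \is a GRing.unit.
Proof.
case/coprimezP=> -[u v] /= Duv; apply/unitrPr; exists u%:~R; rewrite mulrC.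
have k0 : ((k%:Z)%:~R : 'Z_k) = 0 by apply/eqP; rewrite intr_Zp_eq0.
have := congr1 (intmul (1 : 'Z_k)) Duv.
by rewrite rmorphD !rmorphM /= k0 mulr0 addr0.
Qed.

Lemma mxZp_lift m n (S : 'M['Z_k]_(m, n)) :
  exists A : 'M[int]_(m, n), mxZp k A = S.
Proof.
exists (\matrix_(i, j) (S i j : nat)%:Z).
by apply/matrixP => i j; rewrite !mxE -pmulrn natr_Zp.
Qed.

Lemma reversible_modE (M : 'M[int]_2) :
  reversible_mod k M <-> reversible_mx (mxZp k M).
Proof.
rewrite /reversible_mod unit_modP -det_map_mx -unitmxE.
split=> [[uM [R [Ri [Mi [[RRi _] [[MMi _] RMR]]]]]] | [uM [S uS SMS]]].
  move: RRi MMi RMR; rewrite !mx_eqmodP !map_mxM map_mx1 => RRi MMi RMR.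
  split=> //; exists (mxZp k R); first exact: (mulmx1_unit RRi).1.
  by rewrite (mulmx1_invmx RRi) (mulmx1_invmx MMi).
have [R RE] := mxZp_lift S; have [Ri RiE] := mxZp_lift (invmx S).
have [Mi MiE] := mxZp_lift (invmx (mxZp k M)).
split=> //; exists R, Ri, Mi.
by do !split; apply/mx_eqmodP; rewrite !map_mxM ?map_mx1 ?RE ?RiE ?MiE ?mulmxV ?mulVmx.
Qed.

End ReductionModK.

Lemma sqr1_Zp_primepow (p r : nat) (d : 'Z_(p ^ r)) :
  prime p -> odd p || (r <= 1)%N -> (1 < p ^ r)%N -> d * d = 1 ->
  d = 1 \/ d = -1 /\ d - 1 \is a GRing.unit.
Proof.
move=> pp hpr q_gt1 dd.
set D := (d : nat)%:Z; have dE : D%:~R = d by rewrite -pmulrn natr_Zp.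
have dm1 : d - 1 = (D - 1)%:~R by rewrite rmorphB /= dE.
have dp1 : d + 1 = (D + 1)%:~R by rewrite rmorphD /= dE.
have : ((p ^ r)%N%:Z %| D * D - 1)%Z.
  by rewrite -intr_Zp_eq0 // rmorphB rmorphM /= dE dd subrr.
case/(primepow_dvd_sqr_sub1 pp hpr) => [Dm | [Dp cop]].
  by left; apply/eqP; rewrite -subr_eq0 dm1 intr_Zp_eq0.
right; split; last by rewrite dm1 coprimez_unit_Zp.
by apply/eqP; rewrite -subr_eq0 opprK dp1 intr_Zp_eq0.
Qed.

Lemma reversible_mod_primepow (p r : nat) (M : 'M[int]_2) :
  prime p -> odd p || (r <= 1)%N ->
  reversible_mod (p ^ r) M <->
  (\det M = 1 %[mod (p ^ r)%N%:Z])%Z \/ mx_eqmod (p ^ r) (M *m M) 1%:M.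
Proof.
move=> pp hpr; have [->|r_gt0] := posnP r.
  by rewrite expn0; split=> _; [left; rewrite !modz1 | exact: reversible_mod1].
have q_gt1 : (1 < p ^ r)%N by rewrite -(exp1n r) ltn_exp2r // prime_gt1.
rewrite reversible_modE // -intr_Zp_eqP // mx_eqmodP //.
rewrite map_mxM map_mx1 rmorph1 -det_map_mx; set A := mxZp (p ^ r) M.
split=> [/reversible_mx2_det_tr[dd dtr] | [detA | AA]]; last exact: reversible_mx_sqr1.
  rewrite expr2 in dd.
  have [|[dN1 uD]] := sqr1_Zp_primepow pp hpr q_gt1 dd; first by left.
  right; apply: mulmx2_self_eq1 dN1.
  by apply: (mulrI uD); rewrite mulr0 mulrBl mul1r dtr subrr.
have [S SM cop] := exists_reverser M pp.
apply: (reversible_mx_det1 (S := mxZp (p ^ r) S) detA).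
  rewrite unitmxE det_map_mx coprimez_unit_Zp //.
  by rewrite (_ : (p ^ r)%N%:Z = p%:Z ^+ r) ?coprimezXr // -natz natrX natz.
by rewrite -map_mxM SM map_mxM map_mx_adj.
Qed.

Lemma multiplicative_prime_partsP (P : nat -> Prop) (n : nat) : (0 < n)%N ->
  P 1%N -> (forall d m, (d %| m)%N -> P m -> P d) ->
  (forall a b, coprime a b -> P a -> P b -> P (a * b)%N) ->
  P n <-> (forall p, prime p -> (p %| n)%N -> P (p ^ logn p n)%N).
Proof.
move=> + P1 Pdvd Pmul; elim/ltn_ind: n => n IH n_gt0.
have [n_le1|n_gt1] := leqP n 1.
  have -> : n = 1%N by lia.
  by split=> // _ p pp; rewrite dvdn1 => /eqP p1; move: pp; rewrite p1.
set p := pdiv n; have pp : prime p by apply: pdiv_prime.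
have [m cop_pm nE] := pfactor_coprime pp n_gt0; set r := logn p n in nE.
have m_gt0 : (0 < m)%N by move: n_gt0; rewrite nE muln_gt0 => /andP[].
have r_gt0 : (0 < r)%N by rewrite -(pfactor_dvdn 1 pp n_gt0) expn1 pdiv_dvd.
have m_lt_n : (m < n)%N.
  by rewrite nE -{1}[m]muln1 ltn_pmul2l // -(exp1n r) ltn_exp2r // prime_gt1.
have logn_m q : prime q -> q != p -> logn q n = logn q m.
  move=> qp qp'; have pr_gt0 : (0 < p ^ r)%N by rewrite expn_gt0 prime_gt0.
  by rewrite nE lognM // lognX (logn_prime q pp) (negbTE qp') muln0 addn0.
have [Pm_parts parts_Pm] := IH m m_lt_n m_gt0.
split=> [Pn q qp qn | Pparts].
  have [->|qp'] := eqVneq q p; first exact: Pdvd (pfactor_dvdnn p n) Pn.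
  have qm : (q %| m)%N.
    move: qn; rewrite nE Euclid_dvdM // Euclid_dvdX //.
    by rewrite (dvdn_prime2 qp pp) (negbTE qp') orbF.
  by rewrite logn_m //; apply: Pm_parts qp qm; apply: Pdvd Pn; rewrite nE dvdn_mulr.
rewrite nE; apply: Pmul; first by rewrite coprime_sym coprimeXl.
  apply: parts_Pm => q qp qm.
  have qp' : q != p by apply: contraTneq qm => ->; rewrite -prime_coprime.
  by rewrite -logn_m //; apply: Pparts qp _; rewrite nE dvdn_mulr.
by apply: Pparts pp _; rewrite pdiv_dvd.
Qed.

Theorem corollary4p16 (M : 'M[int]_2) (n : nat) (n_gt0 : (0 < n)%N) :
  let D := \det M in
  let cond p := (let q := (p ^ logn p n)%N in
                 (D = 1 %[mod q%:Z])%Z \/ mx_eqmod q (M *m M) 1%:M) in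
  (~~ (4 %| n)%N ->
     (reversible_mod n M <->
      forall p : nat, prime p -> (p %| n)%N -> cond p)) /\
  ((4 %| n)%N ->
     (reversible_mod n M <->
      reversible_mod (2 ^ logn 2 n) M /\
      forall p : nat, prime p -> odd p -> (p %| n)%N -> cond p)).
Proof.
move=> D cond.
have local := multiplicative_prime_partsP (P := reversible_mod^~ M) n_gt0
  (reversible_mod1 M) (fun d k => @reversible_mod_dvdl d k M)
  (fun a b => @reversible_mod_chinese a b M).
have part_cond p : prime p -> odd p || (logn p n <= 1)%N ->
    reversible_mod (p ^ logn p n) M <-> cond p.
  by move=> pp hp; apply: reversible_mod_primepow.
split=> n4; rewrite local.
  have odd_or_simple p : prime p -> odd p || (logn p n <= 1)%N.
    move=> pp; have [p2|->] := even_prime pp; rewrite ?p2 // leqNgt.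
    by apply: contra n4 => ?; apply: dvdn_trans (_ : (2 ^ 2 %| n)%N); rewrite ?pfactor_dvdn.
  by split=> parts p pp pn; apply/part_cond; rewrite ?odd_or_simple //; apply: parts.
split=> [parts | [two_part parts] p pp pn].
  split; first by apply: parts => //; apply: dvdn_trans n4.
  by move=> p pp op pn; apply/part_cond; rewrite ?op //; apply: parts.
have [p2|op] := even_prime pp; first by rewrite p2; exact: two_part.
by apply/part_cond; rewrite ?op //; apply: parts.
Qed.
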